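(* $A_3(16,11)\le 29$.
   Context: $[q]=\{0,\dots,q-1\}$; Hamming distance between words of $[q]^n$ is the number of differing coordinates; $A_q(n,d)$ is the maximum cardinality of a code $C\subseteq[q]^n$ in which any two distinct codewords have Hamming distance at least $d$. *)

From mathcomp Require Import all_boot.
Set Implicit Arguments. Unset Strict Implicit. Unset Printing Implicit Defensive.

Definition word (q n : nat) := {ffun 'I_n -> 'I_q}.

Definition hamming (q n : nat) (x y : word q n) : nat :=
  #|[set i : 'I_n | x i != y i]|.

Definition min_dist_ge (q n d : nat) (C : {set word q n}) : bool :=
  [forall x in C, forall y in C, (x != y) ==> (d <= hamming x y)].

Definition A (q n d : nat) : nat :=
  \max_(C : {set word q n} | min_dist_ge d C) #|C|.

From mathcomp Require Import all_boot zify.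
Set Implicit Arguments. Unset Strict Implicit. Unset Printing Implicit Defensive.

(* Two words agree in n - hamming positions, so distinct codewords of a code
   of length 16 and minimum distance 11 agree in at most 5 positions.  For a
   set S of words, the total number X of agreeing (ordered) pairs, summed over
   coordinates, equals the sum over coordinates k of the squared sizes of the
   fibers {z in S | z k = t}.  Applied to a fiber S of the code itself (all
   words of S share a symbol at one coordinate j) this gives
       |S|^2 + 15 * (least sum of three squares with sum |S|) <= X
                                                  <= |S| (16 + 5 (|S| - 1)),
   whence every fiber has at most 10 words, and in a fiber of exactly 10 words
   any two distinct words agree in exactly 5 positions.  If |C| >= 30, the
   three fibers at each coordinate then all have 10 words; a codeword x then
   has 16 * 10 - 16 = 144 agreements with the other codewords, yet each such
   agreement count is 0 or 5, so 5 would divide 144. *)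

Section PivotSums.
Variable T : finType.
Implicit Types (S : {set T}) (f : T -> nat).

Lemma sum_le_pivot S f c x :
  x \in S -> (forall y, y \in S :\ x -> f y <= c) ->
  \sum_(y in S) f y <= f x + #|S :\ x| * c.
Proof.
move=> xS le_c; rewrite (big_setD1 x) //= leq_add2l -sum_nat_const.
exact: leq_sum.
Qed.

Lemma sum_attains_bound S f c :
  (forall y, y \in S -> f y <= c) -> #|S| * c <= \sum_(y in S) f y ->
  forall x, x \in S -> f x = c.
Proof.
move=> le_c ge_sum x xS; apply/eqP; rewrite eqn_leq le_c //=.
have := sum_le_pivot (c := c) xS (fun y yS => le_c y (subsetP (subD1set S x) y yS)).
by move: ge_sum; rewrite (cardsD1 x S) xS; lia.
Qed.

End PivotSums.

Section Agreements.
Variables q n : nat.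
Implicit Types (x y : word q n) (S C : {set word q n}).

Definition agree x y : nat := \sum_(i < n) (x i == y i).

Definition fiber S (k : 'I_n) (t : 'I_q) : {set word q n} := [set z in S | z k == t].

(* Number of ordered pairs of words of S that agree at coordinate k. *)
Definition collisions S (k : 'I_n) : nat := \sum_(t < q) #|fiber S k t| ^ 2.

Lemma agree_hamming x y : agree x y + hamming x y = n.
Proof.
have -> : hamming x y = \sum_(i < n) (x i != y i).
  rewrite /hamming -sum1_card big_mkcond /=.
  by apply: eq_bigr => i _; rewrite inE; case: (x i != y i).
rewrite /agree -big_split /= (eq_bigr (fun _ => 1)) ?sum1_card ?card_ord //.
by move=> i _; case: (x i == y i).
Qed.

Lemma agree_refl x : agree x x = n.
Proof.
have := agree_hamming x x; rewrite /hamming (eq_finset pred0) ?cards0 ?addn0 //.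
by move=> i; rewrite eqxx.
Qed.

Lemma code_agree_le d C x y :
  min_dist_ge d C -> x \in C -> y \in C -> x != y -> agree x y <= n - d.
Proof.
move=> /forallP/(_ x)/implyP codeC xC yC xy.
have := codeC xC => /forallP/(_ y)/implyP/(_ yC); rewrite xy /= => dist_ge.
by have := agree_hamming x y; lia.
Qed.

Lemma sum_agree_fiber S x :
  \sum_(y in S) agree x y = \sum_(k < n) #|fiber S k (x k)|.
Proof.
rewrite exchange_big /=; apply: eq_bigr => k _.
rewrite -sum1_card big_mkcond [RHS]big_mkcond /=; apply: eq_bigr => y _.
by rewrite !inE eq_sym; case: (y \in S); case: (_ == _).
Qed.

Lemma sum_fiber_card S k : \sum_(t < q) #|fiber S k t| = #|S|.
Proof.
rewrite -sum1_card (partition_big (fun y : word q n => y k) predT) //=.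
by apply: eq_bigr => t _; rewrite sum1dep_card; apply: eq_card => y; rewrite !inE.
Qed.

Lemma total_agreement S :
  \sum_(x in S) \sum_(y in S) agree x y = \sum_(k < n) collisions S k.
Proof.
under eq_bigr do rewrite sum_agree_fiber.
rewrite exchange_big /=; apply: eq_bigr => k _.
rewrite (partition_big (fun y : word q n => y k) predT) //=.
apply: eq_bigr => t _.
rewrite (eq_bigr (fun _ => #|fiber S k t|)); last by move=> y /andP[_ /eqP->].
rewrite sum_nat_const -mulnn; congr (_ * _); apply: eq_card => y.
by rewrite !inE.
Qed.

(* Within a fiber at coordinate k, all pairs collide at k. *)
Lemma collisions_fiber S k t : #|fiber S k t| ^ 2 <= collisions (fiber S k t) k.
Proof.
rewrite /collisions (bigD1 t) //= (_ : fiber (fiber S k t) k t = fiber S k t).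
  exact: leq_addr.
by apply/setP => z; rewrite !inE -andbA andbb.
Qed.

Lemma agree_row_le d C S x :
  min_dist_ge d C -> S \subset C -> x \in S ->
  \sum_(y in S) agree x y <= n + #|S :\ x| * (n - d).
Proof.
move=> codeC /subsetP SC xS; rewrite -[X in X + _](agree_refl x).
apply: sum_le_pivot => // y; rewrite in_setD1 => /andP[yx yS].
by apply: (code_agree_le codeC); rewrite ?SC // eq_sym.
Qed.

End Agreements.

(* Three nonnegative integers with sum m have squares summing to at least
   max (7 m - 36, m^2 / 3); the first bound is exact for m = 10 and m = 11. *)
Lemma three_squares a b c :
  7 * (a + b + c) <= a ^ 2 + b ^ 2 + c ^ 2 + 36 /\
  (a + b + c) ^ 2 <= 3 * (a ^ 2 + b ^ 2 + c ^ 2).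
Proof.
have sq x : 7 * x <= x ^ 2 + 12 by rewrite -mulnn; case: (leqP x 3) => ?; nia.
have amgm x y : 2 * (x * y) <= x ^ 2 + y ^ 2.
  by rewrite -!mulnn; case: (leqP x y) => ?; nia.
split; first by have := sq a; have := sq b; have := sq c; lia.
by move: (amgm a b) (amgm a c) (amgm b c); rewrite -!mulnn; nia.
Qed.

Lemma collisions_ternary n (S : {set word 3 n}) k :
  7 * #|S| <= collisions S k + 36 /\ #|S| ^ 2 <= 3 * collisions S k.
Proof.
rewrite /collisions -(sum_fiber_card S k) !big_ord_recr !big_ord0 /= !add0n.
exact: three_squares.
Qed.

Section TernaryCode.
Variable C : {set word 3 16}.
Hypothesis codeC : min_dist_ge 11 C.

Lemma fiber_total_bounds j s (S := fiber C j s) (m := #|S|)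
    (X := \sum_(x in S) \sum_(y in S) agree x y) :
  [/\ X <= m * (16 + m.-1 * 5), 6 * m ^ 2 <= X &
      m ^ 2 + 15 * (7 * m) <= X + 15 * 36].
Proof.
have SC : S \subset C by apply/subsetP => z; rewrite inE => /andP[].
(* Each word of S agrees with itself 16 times and with the others <= 5 times. *)
have rows x : x \in S -> \sum_(y in S) agree x y <= 16 + m.-1 * 5.
  by move=> xS; rewrite /m (cardsD1 x S) xS add1n; apply: agree_row_le codeC SC xS.
have others c (F : 'I_16 -> nat) : (forall k, c <= F k) ->
    F j + 15 * c <= \sum_(k < 16) F k.
  move=> ge_c; rewrite (bigD1 j) //= leq_add2l.
  apply: (@leq_trans (\sum_(k < 16 | k != j) c)); last exact: leq_sum.
  by rewrite sum_nat_const cardC1 card_ord mulnC.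
have := collisions_fiber C j s; have := total_agreement S.
rewrite -/X -/S -/m => XE Sj.
split.
- by rewrite -sum_nat_const leq_sum.
- have := others _ (fun k => 3 * collisions S k) (fun k => (collisions_ternary S k).2).
  by rewrite -big_distrr /= -XE -/m; lia.
- have := others _ (fun k => collisions S k + 36) (fun k => (collisions_ternary S k).1).
  by rewrite big_split /= sum_nat_const card_ord -XE -/m; lia.
Qed.

Lemma fiber_card_le j s : #|fiber C j s| <= 10.
Proof.
have [] := fiber_total_bounds j s.
move: #|fiber C j s| (\sum_(x in fiber C j s) _) => m X.
rewrite -!mulnn => le_up ge_sq ge_lin.
have m_le11 : m <= 11 by nia.
nia.
Qed.

Lemma full_fiber_agree j s x y :
  #|fiber C j s| = 10 -> x \in fiber C j s -> y \in fiber C j s -> x != y ->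
  agree x y = 5.
Proof.
set S := fiber C j s => S10 xS yS xy.
have SC : S \subset C by apply/subsetP => z; rewrite inE => /andP[].
have others9 z : z \in S -> #|S :\ z| = 9.
  by move=> zS; have := cardsD1 z S; rewrite zS S10 add1n => -[<-].
have [_ _ ge_lin] := fiber_total_bounds j s; rewrite -/S S10 -mulnn in ge_lin.
(* The sandwich is tight at 10 * 61, so every row sum is maximal. *)
have row61 : \sum_(z in S) agree x z = 61.
  apply: (sum_attains_bound (f := fun z => \sum_(w in S) agree z w)) xS.
    by move=> z zS; have := agree_row_le codeC SC zS; rewrite others9.
  by rewrite S10; move: (\sum_(x in S) _) ge_lin => X; lia.
(* Then the 9 agreements of x with the others, each <= 5, sum to 45. *)
apply: (sum_attains_bound (S := S :\ x)); last by rewrite in_setD1 eq_sym xy.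
  move=> z; rewrite in_setD1 => /andP[zx zS].
  by apply: (code_agree_le codeC); rewrite ?(subsetP SC) // eq_sym.
by move: row61; rewrite (big_setD1 x) //= agree_refl others9 //; lia.
Qed.

Lemma fibers_full k t : 29 < #|C| -> #|fiber C k t| = 10.
Proof.
move=> big.
apply: (sum_attains_bound (S := [set: 'I_3]) (f := fun t => #|fiber C k t|)) => //.
  by move=> u _; apply: fiber_card_le.
by rewrite (eq_bigl _ _ (@in_setT _)) sum_fiber_card cardsT card_ord; lia.
Qed.

(* Then two distinct codewords agree in 0 or 5 places. *)
Lemma agree_dvd5 x y :
  29 < #|C| -> x \in C -> y \in C -> x != y -> 5 %| agree x y.
Proof.
move=> big xC yC xy; case: (pickP (fun k => x k == y k)) => [k xy_k | none].
- rewrite (full_fiber_agree (fibers_full k (x k) big)) // !inE ?xC ?yC ?eqxx //.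
  by rewrite eq_sym.
- by rewrite /agree big1 // => k _; rewrite none.
Qed.

End TernaryCode.

Theorem proposition5p11 : A 3 16 11 <= 29.
Proof.
apply/bigmax_leqP => C codeC; rewrite leqNgt; apply/negP => big.
have [x xC] : exists x, x \in C.
  by apply/set0Pn; apply: contraTneq big => ->; rewrite cards0.
have row160 : \sum_(y in C) agree x y = 160.
  rewrite sum_agree_fiber (eq_bigr (fun _ => 10)) ?sum_nat_const ?card_ord //.
  by move=> k _; apply: fibers_full.
have div5 : 5 %| \sum_(y in C :\ x) agree x y.
  apply: dvdn_sum => y; rewrite in_setD1 => /andP[yx yC].
  by apply: (agree_dvd5 codeC) => //; rewrite eq_sym.
move: row160 div5; rewrite (big_setD1 x) //= agree_refl.
by move: (\sum_(y in C :\ x) _) => rest row; have -> : rest = 144 by lia.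
Qed.
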